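(* Let $X$ be a complex Banach space. For every $\gamma\in\mathrm{lin}(\Gamma(\mathbb{D}))\otimes X$, $d^{\widehat{\mathcal{B}}}_1(\gamma)=\inf\left\{\sum_{i=1}^n\frac{|\lambda_i|}{1-|z_i|^2}\|x_i\|\right\}$ and $d^{\widehat{\mathcal{B}}}_\infty(\gamma)=\inf\left\{\sup_{g\in B_{\widehat{\mathcal{B}}(\mathbb{D})}}\sum_{i=1}^n|\lambda_i||g'(z_i)|\|x_i\|\right\}$, where both infima are taken over all representations $\gamma=\sum_{i=1}^n\lambda_i\gamma_{z_i}\otimes x_i$.
   Context: $\mathbb{D}=\{z\in\mathbb{C}:|z|<1\}$. $\widehat{\mathcal{B}}(\mathbb{D},Y)$ (for a complex Banach space $Y$) is the Banach space of holomorphic $f:\mathbb{D}\to Y$ with $f(0)=0$ and $p_{\mathcal{B}}(f)=\sup_{z\in\mathbb{D}}(1-|z|^2)\|f'(z)\|<\infty$, normed by $p_{\mathcal{B}}$; $\widehat{\mathcal{B}}(\mathbb{D})=\widehat{\mathcal{B}}(\mathbb{D},\mathbb{C})$ with closed unit ball $B_{\widehat{\mathcal{B}}(\mathbb{D})}$. For $z\in\mathbb{D}$, $x\in X$, $\gamma_z\otimes x$ is the functional on $\widehat{\mathcal{B}}(\mathbb{D},X^* )$ given by $(\gamma_z\otimes x)(f)=\langle f'(z),x\rangle$, and $\mathrm{lin}(\Gamma(\mathbb{D}))\otimes X$ is the linear span of all $\gamma_z\otimes x$ in $\widehat{\mathcal{B}}(\mathbb{D},X^* )^*$, with elements written $\sum_{i=1}^n\lambda_i\gamma_{z_i}\otimes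 x_i$ (non-uniquely). With infima over all such representations of $\gamma$: $d^{\widehat{\mathcal{B}}}_1(\gamma)=\inf\left(\sup_{g\in B_{\widehat{\mathcal{B}}(\mathbb{D})}}\max_{1\leq i\leq n}|\lambda_i||g'(z_i)|\right)\left(\sum_{i=1}^n\|x_i\|\right)$ and $d^{\widehat{\mathcal{B}}}_\infty(\gamma)=\inf\left(\sup_{g\in B_{\widehat{\mathcal{B}}(\mathbb{D})}}\sum_{i=1}^n|\lambda_i||g'(z_i)|\right)\left(\max_{1\leq i\leq n}\|x_i\|\right)$. *)

From HB Require Import structures.
From mathcomp Require Import all_boot all_order all_algebra.
From mathcomp Require Import all_classical all_reals all_analysis.
From mathcomp Require Import complex.
Set Implicit Arguments. Unset Strict Implicit. Unset Printing Implicit Defensive.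
Import Order.TTheory GRing.Theory Num.Theory ComplexField.
Import numFieldTopology.Exports numFieldNormedType.Exports.
Local Open Scope classical_set_scope.

HB.instance Definition _ (R : realType) := PseudoPointedMetric.copy R[i] (R[i])^o.
HB.instance Definition _ (R : realType) := NormedModule.copy R[i] (R[i])^o.
Local Open Scope ring_scope.
Local Open Scope complex_scope.

Section Bloch.
Variables (R : realType) (X : normedModType R[i]).
Local Notation C := R[i].

Definition inD (z : C) : Prop := `|z| < 1.

(* real-valued norm of a vector of X (the norm of a normedModType over C
   takes values in C; it is real, we take its real part) *)
Definition nrm (x : X) : R := complex.Re `|x|.

Definition is_dual (phi : X -> C) : Prop :=
  (forall (a : C) (x y : X), phi (a *: x + y) = a * phi x + phi y) /\ exists M : C, forall x, `|phi x| <= M * `|x|.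

(* f : D -> X^* (represented pointwise: f z x = <f(z), x>) is holomorphic on D
   with derivative f' (in the operator norm of X^* ), f(0)=0, and its Bloch
   seminorm p_B(f) = sup_z (1-|z|^2)||f'(z)|| is finite:
   f belongs to \hat{B}(D, X^* ) with derivative f'. *)
Definition bloch_vec (f f' : C -> X -> C) : Prop :=
  (forall z, inD z -> is_dual (f z) /\ is_dual (f' z)) /\
  (forall z, inD z -> forall e : C, 0 < e ->
     \forall h \near (0 : C)^',
       forall x, `|(f (z + h) x - f z x) / h - f' z x| <= e * `|x|) /\
  (forall x, f 0 x = 0) /\
  (exists M : C, forall z, inD z -> forall x,
     (1 - `|z| ^+ 2) * `|f' z x| <= M * `|x|).

Definition bloch_ball (g g' : C -> C) : Prop :=
  (forall z, inD z -> (fun h => (g (z + h) - g z) / h) @ (0 : C)^' --> g' z) /\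
  g 0 = 0 /\
  (forall z, inD z -> (1 - `|z| ^+ 2) * `|g' z| <= 1).

(* a representation sum_{i<n} lambda_i gamma_{z_i} (x) x_i, z_i in D *)
Record rep := Rep {
  rn : nat;
  rlam : 'I_rn -> C;
  rz : 'I_rn -> C;
  rzD : forall i, inD (rz i);
  rx : 'I_rn -> X }.
Arguments rlam : clear implicits.
Arguments rzD : clear implicits.
Arguments rz : clear implicits.
Arguments rx : clear implicits.

(* action of the represented functional on f in \hat{B}(D,X^* ) with derivative f' *)
Definition rep_act (r : rep) (f' : C -> X -> C) : C :=
  \sum_(i < rn r) rlam r i * f' (rz r i) (rx r i).

(* two representations represent the same element of lin(Gamma(D)) (x) X *)
Definition same_elt (r s : rep) : Prop :=
  forall f f', bloch_vec f f' -> rep_act r f' = rep_act s f'.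

Local Open Scope ereal_scope.

Definition sup_max (r : rep) : \bar R :=
  ereal_sup [set (\big[Order.max/0%R]_(i < rn r)
                   complex.Re (`|rlam r i| * `|g' (rz r i)|))%:E
            | g' in [set g' | exists g, bloch_ball g g']].

Definition sup_sum (r : rep) : \bar R :=
  ereal_sup [set (\sum_(i < rn r) complex.Re (`|rlam r i| * `|g' (rz r i)|))%:E
            | g' in [set g' | exists g, bloch_ball g g']].

Definition d1 (r : rep) : \bar R :=
  ereal_inf [set sup_max s * (\sum_(i < rn s) nrm (rx s i))%:E | s in same_elt r].

Definition dinf (r : rep) : \bar R :=
  ereal_inf [set sup_sum s * (\big[Order.max/0%R]_(i < rn s) nrm (rx s i))%:E
            | s in same_elt r].

Definition d1_alt (r : rep) : \bar R :=
  ereal_inf [set (\sum_(i < rn s)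
                   complex.Re (`|rlam s i| / (1 - `|rz s i| ^+ 2)) * nrm (rx s i))%:E
            | s in same_elt r].

Definition dinf_alt (r : rep) : \bar R :=
  ereal_inf [set ereal_sup
                 [set (\sum_(i < rn s)
                        complex.Re (`|rlam s i| * `|g' (rz s i)|) * nrm (rx s i))%:E
                 | g' in [set g' | exists g, bloch_ball g g']]
            | s in same_elt r].

End Bloch.

From HB Require Import structures.
From mathcomp Require Import all_boot all_order all_algebra.
From mathcomp Require Import all_classical all_reals all_analysis.
From mathcomp Require Import complex.
From mathcomp Require Import ring.

(** Rescaling the atoms of a representation does not change the represented
   functional. For [d_1]: on the unit ball of the Bloch space
   [|g'(z)| <= 1/(1-|z|^2)], with equality at [z = a] for the peak function
   [g_a(w) = (1-|a|^2) w / (1 - conj(a) w)]. So the supremum in [d_1] is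
   [max_i |lambda_i|/(1-|z_i|^2)]; moving these weights onto the vectors [x_i]
   turns it into [1] and [sum_i ||x_i||] into the right-hand side. For [d_inf],
   moving [||x_i||] onto [lambda_i] normalises the vectors and turns the
   supremum into the right-hand side. *)

Set Implicit Arguments. Unset Strict Implicit. Unset Printing Implicit Defensive.
Import Order.TTheory GRing.Theory Num.Theory ComplexField.
Import numFieldTopology.Exports numFieldNormedType.Exports.
Local Open Scope classical_set_scope.
Local Open Scope ring_scope.

Lemma Re_le (R : rcfType) (u v : R[i]) : u <= v -> complex.Re u <= complex.Re v.
Proof. by rewrite lecE => /andP[]. Qed.

Lemma Re_ge0 (R : rcfType) (u : R[i]) : 0 <= u -> 0 <= complex.Re u.
Proof. exact: Re_le. Qed.

Lemma Re_mulr_ge0 (R : rcfType) (u v : R[i]) : 0 <= v ->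
  complex.Re (u * v) = complex.Re u * complex.Re v.
Proof. by case: u => ur ui; case: v => vr vi /ger0_Im /= ->; rewrite mulr0 subr0. Qed.

Lemma sqr_norm_1_subJM (C : numClosedFieldType) (a z : C) :
  `|1 - a^* * z| ^+ 2 = (1 - `|z| ^+ 2) * (1 - `|a| ^+ 2) + `|z - a| ^+ 2.
Proof. by rewrite !normCK !rmorphB !rmorphM rmorph1 /= conjCK; ring. Qed.

Lemma ereal_inf_image_le (R : realType) (T : Type) (A : set T) (f g : T -> \bar R) :
  (forall s, A s -> exists2 t, A t & (f t <= g s)%E) ->
  (ereal_inf (f @` A) <= ereal_inf (g @` A))%E.
Proof.
move=> fg; apply: le_ereal_inf_tmp => _ [s As <-].
have [t At ft_le] := fg s As.
by apply: le_trans (ereal_inf_lbound _) ft_le; exists t.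
Qed.

Section UnitDisc.
Variable R : realType.
Local Notation C := R[i].

Lemma inD0 : inD (0 : C).
Proof. by rewrite /inD normr0. Qed.

Lemma inD_1_sub_sqr_gt0 (z : C) : inD z -> 0 < 1 - `|z| ^+ 2.
Proof. by move=> zD; rewrite subr_gt0 -(expr1n _ 2) ltrXn2r // nnegrE. Qed.

Lemma inD_1_subJM_neq0 (a w : C) : inD a -> inD w -> 1 - a^* * w != 0.
Proof.
move=> aD wD; rewrite subr_eq0; apply/eqP => aw1.
have : `|a^* * w| < 1.
  rewrite normrM norm_conjC; apply: le_lt_trans aD.
  by rewrite -[leRHS]mulr1 ler_wpM2l // ltW.
by rewrite -aw1 normr1 ltxx.
Qed.

Definition peak (a : C) (w : C) : C := (1 - `|a| ^+ 2) * w / (1 - a^* * w).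
Definition peak' (a : C) (w : C) : C := (1 - `|a| ^+ 2) / (1 - a^* * w) ^+ 2.

Lemma peak_diff_quotient (a z h : C) : inD a -> inD z -> inD (z + h) -> h != 0 ->
  (peak a (z + h) - peak a z) / h =
  (1 - `|a| ^+ 2) / ((1 - a^* * (z + h)) * (1 - a^* * z)).
Proof.
move=> aD zD zhD h0; have D0 := inD_1_subJM_neq0 aD zD.
have D1 := inD_1_subJM_neq0 aD zhD.
by rewrite /peak; field; rewrite D1 D0 h0.
Qed.

Lemma peak_deriv (a z : C) : inD a -> inD z ->
  (fun h => (peak a (z + h) - peak a z) / h) @ (0 : C)^' --> peak' a z.
Proof.
move=> aD zD; have D0 := inD_1_subJM_neq0 aD zD.
have quotient_cvg : (fun h => (1 - `|a| ^+ 2) / ((1 - a^* * (z + h)) * (1 - a^* * z)))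
    @ (0 : C)^' --> peak' a z.
  rewrite /peak' expr2; apply: cvg_within_filter.
  apply: cvgM; first exact: cvg_cst.
  apply: cvgV; first by rewrite mulf_neq0.
  apply: cvgM; last exact: cvg_cst.
  apply: cvgB; first exact: cvg_cst.
  apply: cvgM; first exact: cvg_cst.
  by rewrite -[X in _ --> X]addr0; apply: cvgD; [exact: cvg_cst | exact: cvg_id].
apply: cvg_trans quotient_cvg; apply: near_eq_cvg; near=> h.
apply/esym; apply: peak_diff_quotient => //; last by near: h; exact: nbhs_dnbhs_neq.
have small_h : `|h| < 1 - `|z|.
  by near: h; apply: cvg_within; apply: nbhs0_lt; rewrite subr_gt0.
by rewrite /inD; apply: le_lt_trans (ler_normD _ _) _; rewrite -ltrBrDl.
Unshelve. all: by end_near.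
Qed.

Lemma bloch_ball_peak (a : C) : inD a -> bloch_ball (peak a) (peak' a).
Proof.
move=> aD; split; first by move=> z; exact: peak_deriv.
split; first by rewrite /peak mulr0 mul0r.
move=> z zD; have a_gt0 := inD_1_sub_sqr_gt0 aD.
rewrite /peak' normrM normfV normrX (gtr0_norm a_gt0) mulrA.
rewrite ler_pdivrMr ?exprn_gt0 ?normr_gt0 ?inD_1_subJM_neq0 //.
by rewrite mul1r sqr_norm_1_subJM lerDl exprn_ge0.
Qed.

Lemma norm_peak'_center (a : C) : inD a -> `|peak' a a| = (1 - `|a| ^+ 2)^-1.
Proof.
move=> aD; have a_gt0 := inD_1_sub_sqr_gt0 aD.
rewrite /peak' -normCKC ger0_norm; last by rewrite divr_ge0 ?exprn_ge0 ?ltW.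
by field; rewrite gt_eqF.
Qed.

End UnitDisc.

Section Representations.
Variables (R : realType) (X : normedModType R[i]).
Local Notation C := R[i].
Local Notation lam s := (@rlam _ X s).
Local Notation pt s := (@rz _ X s).
Local Notation ptD s := (@rzD _ X s).
Local Notation vec s := (@rx _ X s).

Lemma is_dual0 (phi : X -> C) : is_dual phi -> phi 0 = 0.
Proof.
by move=> [phi_lin _]; have := phi_lin (-1) 0 0; rewrite scaler0 addr0 mulN1r addNr.
Qed.

Lemma is_dualZ (phi : X -> C) (c : C) (x : X) : is_dual phi -> phi (c *: x) = c * phi x.
Proof. by move=> phiD; have := phiD.1 c x 0; rewrite addr0 (is_dual0 phiD) addr0. Qed.

Definition rescale (s : rep X) (c : 'I_(rn s) -> C) : rep X :=
  @Rep _ X (rn s) (fun i => lam s i / c i) (pt s) (ptD s) (fun i => c i *: vec s i).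
Arguments rescale : clear implicits.

Lemma rep_act_rescale (s : rep X) (c : 'I_(rn s) -> C) (f f' : C -> X -> C) :
  (forall i, c i = 0 -> lam s i = 0 \/ vec s i = 0) -> bloch_vec f f' ->
  rep_act (rescale s c) f' = rep_act s f'.
Proof.
move=> c0 fB; apply: eq_bigr => i _ /=.
have f'D := (fB.1 _ (ptD s i)).2.
rewrite is_dualZ //; have [/c0[->|->]|ci_neq0] := eqVneq (c i) 0.
- by rewrite !mul0r.
- by rewrite is_dual0 // !mulr0.
- by rewrite mulrA divfK.
Qed.

Lemma same_elt_rescale (r s : rep X) (c : 'I_(rn s) -> C) :
  (forall i, c i = 0 -> lam s i = 0 \/ vec s i = 0) ->
  same_elt r s -> same_elt r (rescale s c).
Proof. by move=> c0 rs f f' fB; rewrite (rs f f' fB) (rep_act_rescale c0 fB). Qed.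

Lemma nrm_ge0 (x : X) : 0 <= nrm x.
Proof. exact: Re_ge0. Qed.

(* the norm of the atom [lambda_i gamma_(z_i)] in the dual of the Bloch space *)
Definition atom_norm (s : rep X) (i : 'I_(rn s)) : C :=
  `|lam s i| / (1 - `|pt s i| ^+ 2).
Arguments atom_norm : clear implicits.

Definition normalize_atoms (s : rep X) : rep X := rescale s (atom_norm s).

Lemma atom_norm_ge0 (s : rep X) (i : 'I_(rn s)) : 0 <= atom_norm s i.
Proof. by rewrite divr_ge0 // ltW // (inD_1_sub_sqr_gt0 (ptD s i)). Qed.

Lemma atom_norm_eq0 (s : rep X) (i : 'I_(rn s)) : atom_norm s i = 0 -> lam s i = 0.
Proof.
rewrite /atom_norm => /eqP; rewrite mulf_eq0 invr_eq0 normr_eq0.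
by rewrite (gt_eqF (inD_1_sub_sqr_gt0 (ptD s i))) orbF => /eqP.
Qed.

Lemma bloch_ball_exists : exists g', exists g : C -> C, bloch_ball g g'.
Proof. by exists (peak' 0), (peak 0); apply: bloch_ball_peak; exact: inD0. Qed.

Lemma sup_max_ge0 (s : rep X) : (0 <= sup_max s)%E.
Proof.
have [g' g'B] := bloch_ball_exists; apply: le_ereal_sup_tmp.
by exists (\big[Order.max/0]_(i < rn s) complex.Re (`|lam s i| * `|g' (pt s i)|))%:E;
  [exists g' | rewrite lee_fin bigmax_ge_id].
Qed.

Lemma atom_norm_le_sup_max (s : rep X) (i : 'I_(rn s)) :
  ((complex.Re (atom_norm s i))%:E <= sup_max s)%E.
Proof.
apply: le_ereal_sup_tmp; eexists.
  by exists (peak' (pt s i)) => //; exists (peak (pt s i)); exact: bloch_ball_peak (ptD s i).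
rewrite lee_fin; apply: le_trans (le_bigmax _ _ i); apply: Re_le.
by rewrite /atom_norm norm_peak'_center //; exact: (ptD s i).
Qed.

Lemma sup_sum_ge0 (s : rep X) : (0 <= sup_sum s)%E.
Proof.
have [g' g'B] := bloch_ball_exists; apply: le_ereal_sup_tmp.
exists (\sum_(i < rn s) complex.Re (`|lam s i| * `|g' (pt s i)|))%:E; first by exists g'.
by rewrite lee_fin; apply: sumr_ge0 => i _; apply/Re_ge0/mulr_ge0.
Qed.

Lemma nrmZ_ge0 (c : C) (x : X) : (0 <= c)%R -> nrm (c *: x) = (complex.Re c * nrm x)%R.
Proof. by move=> c_ge0; rewrite /nrm normrZ Re_mulr_ge0 // ger0_norm. Qed.

Lemma d1_alt_term_le (s : rep X) :
  ((\sum_(i < rn s) complex.Re (atom_norm s i) * nrm (vec s i))%:E <=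
   sup_max s * (\sum_(i < rn s) nrm (vec s i))%:E)%E.
Proof.
have max_le : ((\big[Order.max/0]_(i < rn s) complex.Re (atom_norm s i))%:E <= sup_max s)%E.
  rewrite -EFin_bigmax bigmax_le //; first exact: sup_max_ge0.
  by move=> i _; exact: atom_norm_le_sup_max.
have sum_ge0 : (0 <= (\sum_(i < rn s) nrm (vec s i))%:E)%E.
  by rewrite lee_fin; apply: sumr_ge0 => i _; exact: nrm_ge0.
apply: le_trans (lee_wpmul2r sum_ge0 max_le).
rewrite -EFinM lee_fin mulr_sumr ler_sum // => i _.
by rewrite ler_wpM2r ?nrm_ge0 // (le_bigmax _ (fun i => complex.Re (atom_norm s i))).
Qed.

Lemma sup_max_normalize_atoms_le1 (s : rep X) : (sup_max (normalize_atoms s) <= 1)%E.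
Proof.
apply: ge_ereal_sup => _ [g' [g gB] <-]; rewrite lee_fin bigmax_le // => i _.
cbn [rlam rz normalize_atoms rescale].
rewrite -[leRHS]/(complex.Re 1); apply: Re_le.
have [->|lam_neq0] := eqVneq (lam s i) 0; first by rewrite !mul0r normr0 mul0r.
rewrite normf_div (ger0_norm (@atom_norm_ge0 s i)) /atom_norm invf_div mulrCA divff.
  by rewrite mulr1; exact: gB.2.2 (ptD s i).
by rewrite normr_eq0.
Qed.

Lemma d1_normalize_atoms_term_le (s : rep X) :
  (sup_max (normalize_atoms s) * (\sum_(i < rn s) nrm (vec (normalize_atoms s) i))%:E
   <= (\sum_(i < rn s) complex.Re (atom_norm s i) * nrm (vec s i))%:E)%E.
Proof.
under eq_bigr => i _ do rewrite nrmZ_ge0 ?atom_norm_ge0 //.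
apply: le_trans (lee_wpmul2r _ (sup_max_normalize_atoms_le1 s)) _; last by rewrite mul1e.
rewrite lee_fin; apply: sumr_ge0 => i _.
by rewrite mulr_ge0 ?nrm_ge0 //; apply/Re_ge0/atom_norm_ge0.
Qed.

Lemma d1_eq (r : rep X) : d1 r = d1_alt r.
Proof.
apply/le_anti/andP; split; apply: ereal_inf_image_le => s rs.
- exists (normalize_atoms s); last exact: d1_normalize_atoms_term_le.
  by apply: same_elt_rescale => // i /atom_norm_eq0; left.
- by exists s => //; exact: d1_alt_term_le.
Qed.

Definition sup_sum_nrm (s : rep X) : \bar R :=
  ereal_sup [set (\sum_(i < rn s)
                   complex.Re (`|lam s i| * `|g' (pt s i)|) * nrm (vec s i))%:E
            | g' in [set g' | exists g, bloch_ball g g']].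

Definition normalize_vecs (s : rep X) : rep X := rescale s (fun i => `|vec s i|^-1).

Lemma sup_sum_normalize_vecs (s : rep X) :
  sup_sum (normalize_vecs s) = sup_sum_nrm s.
Proof.
congr ereal_sup; apply: eq_imagel => g' _; congr EFin; apply: eq_bigr => i _.
by rewrite [rlam _]/= invrK normrM normr_id mulrAC Re_mulr_ge0.
Qed.

Lemma max_nrm_normalize_vecs_le1 (s : rep X) :
  \big[Order.max/0]_(i < rn s) nrm (vec (normalize_vecs s) i) <= 1.
Proof.
rewrite bigmax_le // => i _; rewrite -[leRHS]/(complex.Re 1); apply: Re_le.
rewrite [rx _]/= normrZ normfV normr_id.
by have [->|x_neq0] := eqVneq `|vec s i| 0; rewrite ?invr0 ?mul0r ?mulVf.
Qed.

Lemma dinf_normalize_vecs_term_le (s : rep X) :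
  (sup_sum (normalize_vecs s) *
   (\big[Order.max/0]_(i < rn s) nrm (vec (normalize_vecs s) i))%:E <= sup_sum_nrm s)%E.
Proof.
have max_le1 := max_nrm_normalize_vecs_le1 s; rewrite -lee_fin in max_le1.
apply: le_trans (lee_wpmul2l (sup_sum_ge0 _) max_le1) _.
by rewrite mule1 sup_sum_normalize_vecs.
Qed.

Lemma dinf_alt_term_le (s : rep X) :
  (sup_sum_nrm s <= sup_sum s * (\big[Order.max/0]_(i < rn s) nrm (vec s i))%:E)%E.
Proof.
apply: ge_ereal_sup => _ [g' g'B <-].
set M := \big[Order.max/0]_(i < rn s) nrm (vec s i).
apply: (@le_trans _ _
  ((\sum_(i < rn s) complex.Re (`|lam s i| * `|g' (pt s i)|)) * M)%:E).
  rewrite lee_fin mulr_suml ler_sum // => i _.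
  by rewrite ler_wpM2l ?(le_bigmax _ (fun i => nrm (vec s i))) //; apply/Re_ge0/mulr_ge0.
rewrite EFinM lee_wpmul2r ?lee_fin ?bigmax_ge_id //.
by apply: ereal_sup_ubound; exists g'.
Qed.

Lemma dinf_eq (r : rep X) : dinf r = dinf_alt r.
Proof.
apply/le_anti/andP; split; apply: ereal_inf_image_le => s rs.
- exists (normalize_vecs s); last exact: dinf_normalize_vecs_term_le.
  by apply: same_elt_rescale => // i /eqP; rewrite invr_eq0 normr_eq0 => /eqP; right.
- by exists s => //; exact: dinf_alt_term_le.
Qed.

End Representations.

Theorem proposition2p7 (R : realType) (X : completeNormedModType R[i])
  (r : rep X) :
  d1 r = d1_alt r /\ dinf r = dinf_alt r.
Proof. by split; [exact: d1_eq | exact: dinf_eq]. Qed.
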